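(* Let $G$ be a connected graph with no Hamiltonian path, and let $T$ be a spanning tree of $G$ satisfying (C1) and (C2). Let $b,r\in B(T)$ be such that $V(P_T[b,r])\cap B(T)=\{b,r\}$, orient $P_T[b,r]$ from $b$ to $r$, and let $s\in L(T)$. If $sx\in E(G)$ for some $x\in V(P_T[b,r])\setminus\{b\}$, then $sx^-\notin E(G)$, where $x^-$ is the predecessor of $x$ on $P_T[b,r]$.
   Context: All graphs are finite and simple. For a tree $T$, $L(T)$ is the set of leaves (degree-one vertices) and $B(T)$ the set of branch vertices (degree at least three); $P_T[u,v]$ is the unique path in $T$ between $u$ and $v$. Since $G$ has no Hamiltonian path, every spanning tree of $G$ has a branch vertex. Reducible stem: for a tree $T$ with $B(T)\neq\emptyset$ and each leaf $x\in L(T)$, let $y_x\in B(T)$ be the branch vertex such that the path $P_T[x,y_x]$ contains no branch vertex other than $y_x$; deleting $V(P_T[x,y_x])\setminus\{y_x\}$ from $T$ for all $x\in L(T)$ yields a subtree $R\_Stem(T)$. Condition (C1): $|L(T)|$ is minimum among all spanning trees of $G$. Condition (C2): subject to (C1), $|V(R\_Stem(T))|$ is maximum. *)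

(* finite simple graphs as symmetric irreflexive relations. *)
From mathcomp Require Import all_boot.
From mathcomp Require Import boolp.
Set Implicit Arguments. Unset Strict Implicit. Unset Printing Implicit Defensive.

Section Graphs.
Variable V : finType.

Definition connected_graph (G : rel V) : Prop := forall x y, connect G x y.

Definition has_ham_path (G : rel V) : Prop :=
  exists x (p : seq V), [/\ path G x p, uniq (x :: p) & forall v, v \in x :: p].

Definition acyclic (T : rel V) : Prop :=
  forall c : seq V, uniq c -> 3 <= size c -> ~~ cycle T c.

Definition spanning_tree (G T : rel V) : Prop :=
  [/\ symmetric T, subrel T G, connected_graph T & acyclic T].

Definition deg (T : rel V) (x : V) : nat := #|[set y | T x y]|.
Definition leaf (T : rel V) (x : V) : bool := deg T x == 1.
Definition branch (T : rel V) (x : V) : bool := 3 <= deg T x.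
Definition nleaves (T : rel V) : nat := #|[set x | leaf T x]|.

(* u :: p is the vertex sequence of a path of T from u to v
   (in a tree this is the unique path P_T[u,v]) *)
Definition is_tpath (T : rel V) (u v : V) (p : seq V) : bool :=
  [&& path T u p, last u p == v & uniq (u :: p)].

(* v is deleted when forming R_Stem(T): v lies on P_T[x, y_x] minus y_x for
   some leaf x, where y_x is a branch vertex and P_T[x,y_x] has no branch
   vertex other than y_x.  belast x p = vertices of the path except y. *)
Definition stem_removed (T : rel V) (v : V) : Prop :=
  exists x y (p : seq V),
    [/\ leaf T x, branch T y, is_tpath T x y p,
        all (fun w => ~~ branch T w) (belast x p) & v \in belast x p].

Definition rstem_card (T : rel V) : nat :=
  #|[set v | `[< ~ stem_removed T v >]]|.

Definition C1 (G T : rel V) : Prop :=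
  forall T', spanning_tree G T' -> nleaves T <= nleaves T'.

Definition C2 (G T : rel V) : Prop :=
  forall T', spanning_tree G T' -> nleaves T' = nleaves T ->
    rstem_card T' <= rstem_card T.

End Graphs.

From mathcomp Require Import all_boot.
From mathcomp Require Import boolp zify.
Set Implicit Arguments. Unset Strict Implicit. Unset Printing Implicit Defensive.

(* Suppose s is adjacent in G to both u = x^- and v = x, and let w be the
   neighbour of s in T.  Exchanging the tree edges sw and uv for su and sv
   yields a spanning tree T' of G in which s has degree 2, w has lost one
   degree, and every other degree is unchanged.  If deg_T w <> 2, then T' has
   fewer leaves than T, contradicting (C1).  If deg_T w = 2, then T' has as
   many leaves and the same branch vertices as T.  The vertex s together with
   the non-branch vertices of P_T[b,r] contains no leaf of T' and is left only
   through branch vertices, so no T'-stem meets it; every T'-stem is then a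
   T-stem, or a T-stem minus s when it starts at w.  Since s itself lies on a
   T-stem, R_Stem(T') is strictly larger than R_Stem(T), contradicting (C2). *)

Section StemFacts.
Variables (V : finType) (T : rel V).

Lemma leaf_not_branch x : leaf T x -> ~~ branch T x.
Proof. by rewrite /leaf /branch => /eqP ->. Qed.

Lemma leaf_of_unique_nbr s w : (forall y, T s y = (y == w)) -> leaf T s.
Proof.
move=> s_nbr; rewrite /leaf /deg (_ : [set z | T s z] = [set w]) ?cards1 //.
by apply/setP => z; rewrite !inE s_nbr.
Qed.

Lemma nbrs_deg2 y a c : ~~ branch T y -> T y a -> T y c -> a != c ->
  [set z | T y z] = [set a; c].
Proof.
rewrite /branch /deg -ltnNge ltnS => degy ya yc ac.
apply/esym/eqP; rewrite eqEcard cards2 ac (leq_trans degy) // andbT.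
by apply/subsetP => z; rewrite !inE => /orP[] /eqP ->.
Qed.

Lemma leaf_stem_removed s b :
  connected_graph T -> branch T b -> leaf T s -> stem_removed T s.
Proof.
move=> Tconn bb ls; have sNb := leaf_not_branch ls.
case/connectP: (Tconn s b) => q0 q0P bE; rewrite bE in bb.
case/shortenP: q0P bb => q qP uq _ bb.
have hasb : has (branch T) q.
  apply/hasP; exists (last s q) => //.
  by move: (mem_last s q); rewrite inE; case: eqP bb sNb => // -> ->.
have jq : find (branch T) q < size q by rewrite -has_find.
set j := find (branch T) q in jq *.
exists s, (nth s q j), (take j.+1 q).
rewrite (take_nth s jq) belast_rcons /is_tpath last_rcons eqxx -(take_nth s jq).
split=> //.
- exact: nth_find.
- by rewrite take_path //=; have := take_uniq j.+2 uq.
- apply/andP; split=> //; apply/allP => z /(nthP s) [k]; rewrite size_take jq => kj <-.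
  by rewrite nth_take // before_find.
- exact: mem_head.
Qed.

Lemma rstem_card_lt T' s :
  (forall y, stem_removed T' y -> stem_removed T y) ->
  stem_removed T s -> ~ stem_removed T' s -> rstem_card T < rstem_card T'.
Proof.
move=> T'T Ts T's; apply: proper_card; apply/properP; split.
  by apply/subsetP => y; rewrite !inE => /asboolP yT; apply/asboolP => /T'T.
by exists s; rewrite !inE; apply/asboolP.
Qed.

End StemFacts.

Section LeafSwap.
Variables (V : finType) (T : rel V) (s w u v : V).
Hypotheses (Tsym : symmetric T) (Tirr : irreflexive T).
Hypothesis s_nbr : forall y, T s y = (y == w).
Hypotheses (Tuv : T u v) (us : u != s) (vs : v != s).

Let s_leaf : leaf T s := leaf_of_unique_nbr s_nbr.

Definition leaf_swap : rel V := fun y z =>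
  if y == s then (z == u) || (z == v)
  else if z == s then (y == u) || (y == v)
  else T y z && ~~ ((y == u) && (z == v) || (y == v) && (z == u)).

Local Notation T' := leaf_swap.

Lemma leaf_swap_s z : T' s z = (z == u) || (z == v).
Proof. by rewrite /T' eqxx. Qed.

Lemma leaf_swap_sym : symmetric T'.
Proof.
move=> y z; rewrite /T'.
have [-> | _] := eqVneq y s; have [zs | _] := eqVneq z s; rewrite ?zs //.
by rewrite Tsym orbC (andbC (y == v)) (andbC (y == u)).
Qed.

Lemma leaf_swap_sub : {in predC1 s &, subrel T' T}.
Proof. by move=> y z /= /negbTE ys /negbTE zs; rewrite /T' ys zs => /andP[]. Qed.

Lemma leaf_swap_subrel (G : rel V) :
  symmetric G -> subrel T G -> G s u -> G s v -> subrel T' G.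
Proof.
move=> Gsym TG Gsu Gsv y z; rewrite /T'.
case: (y =P s) => [->|_]; first by case/orP=> /eqP ->.
case: (z =P s) => [->|_]; first by case/orP=> /eqP ->; rewrite Gsym.
by case/andP=> /TG.
Qed.

Lemma connect_leaf_swap_uv : connect T' u v.
Proof.
apply: (@connect_trans _ _ s); apply: connect1; last by rewrite leaf_swap_s eqxx orbT.
by rewrite leaf_swap_sym leaf_swap_s eqxx.
Qed.

Lemma connect_leaf_swap_edge y z : y != s -> z != s -> T y z -> connect T' y z.
Proof.
move=> ys zs yz.
have [/orP[]/andP[/eqP-> /eqP->] | keep] :=
  boolP ((y == u) && (z == v) || (y == v) && (z == u)).
- exact: connect_leaf_swap_uv.
- by rewrite (sym_connect_sym leaf_swap_sym) connect_leaf_swap_uv.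
by apply: connect1; rewrite /T' (negbTE ys) (negbTE zs) yz keep.
Qed.

Lemma leaf_notin_uniq_path x q : path T x q -> uniq (x :: q) ->
  last x q != s -> s \notin q.
Proof.
move=> xq uxq sl; apply/negP => sq.
case/splitPr: sq xq uxq sl => q1 [|c q2]; rewrite last_cat ?eqxx // => + + _.
rewrite -cat_cons cat_uniq cat_path /= Tsym !s_nbr => /and4P[_ /eqP pw /eqP cw _].
by case/and3P=> _ /negP []; rewrite cw -pw mem_last orbT.
Qed.

Lemma leaf_swap_connected : connected_graph T -> connected_graph T'.
Proof.
move=> Tconn.
pose Tnos := [rel y z | [&& y != s, z != s & T y z]].
have TnosT' : subrel Tnos (connect T').
  by move=> y z /and3P[]; apply: connect_leaf_swap_edge.
have uy y : connect T' u y.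
  have [->|ys] := eqVneq y s.
    by apply: connect1; rewrite leaf_swap_sym leaf_swap_s eqxx.
  case/connectP: (Tconn u y) => q0 q0P yE; rewrite yE in ys *.
  case/shortenP: q0P ys => q qP uq _ ys.
  have qs := leaf_notin_uniq_path qP uq ys.
  apply: (connect_sub TnosT'); apply/connectP; exists q => //.
  apply: (@sub_in_path _ (predC1 s)) qP; first by move=> y1 z1 /= *; apply/and3P.
  by rewrite /= us; apply/allP => z zq; apply: contraNneq qs => <-.
by move=> y z; apply: connect_trans (uy z); rewrite (sym_connect_sym leaf_swap_sym).
Qed.

Lemma leaf_swap_pair y z : y != s -> z != s -> T' s y -> T' s z -> y != z ->
  (y == u) && (z == v) || (y == v) && (z == u).
Proof.
move=> ys zs; rewrite !leaf_swap_s.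
by case/orP=> /eqP -> /orP[]/eqP ->; rewrite ?eqxx //= ?andbT ?orbT.
Qed.

Lemma leaf_swap_acyclic : acyclic T -> acyclic T'.
Proof.
move=> Tacyc cy ucy cy3; apply/negP => ccy.
have [scy|sNcy] := boolP (s \in cy); last first.
  apply: (negP (Tacyc cy ucy cy3)); apply: (sub_in_cycle leaf_swap_sub) ccy.
  by apply/allP => y yc; apply: contraNneq sNcy => <-.
have [k q ec] := rot_to scy.
have : cycle T' (s :: q) by rewrite -ec rot_cycle.
have : uniq (s :: q) by rewrite -ec rot_uniq.
have : 3 <= size (s :: q) by rewrite -ec size_rot.
case: q {ec} => [|a [|c q]] // _ /andP[sNq uq].
rewrite /cycle rcons_path => /andP[/andP[s_a aq] z_s].
set z := last a (c :: q) in z_s.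
have qNs : all (predC1 s) (a :: c :: q).
  by apply/allP => y yq; apply: contraNneq sNq => <-.
have /and3P[as_ cs _] := qNs.
have zq : z \in c :: q := mem_last c q.
have zs : z != s by apply: (allP qNs); rewrite inE zq orbT.
have az : a != z by apply: contraNneq (andP uq).1 => ->.
have sz : T' s z by rewrite leaf_swap_sym.
have key := leaf_swap_pair as_ zs s_a sz az.
have q0 : q != [::].
  apply/eqP => q0; move: key aq; rewrite /z q0 /= andbT /T'.
  by rewrite (negbTE as_) (negbTE cs) => ->; rewrite andbF.
have Tza : T z a.
  by case/orP: key => /andP[/eqP-> /eqP->]; rewrite // Tsym.
have Taq : path T a (c :: q) := sub_in_path leaf_swap_sub qNs aq.
have c3 : 3 <= size (a :: c :: q) by case: (q) q0.
apply: (negP (Tacyc (a :: c :: q) uq c3)).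
by rewrite /cycle rcons_path Taq.
Qed.

Lemma leaf_swap_nbrs y : y != s ->
  #|[set z | T' y z]| = #|[set z | T y z] :\ s|.
Proof.
move=> ys; have T'y z : z != s ->
    T' y z = T y z && ~~ ((y == u) && (z == v) || (y == v) && (z == u)).
  by move=> zs; rewrite /T' (negbTE ys) (negbTE zs).
have [yuv | yNuv] := boolP ((y == u) || (y == v)); last first.
  apply: eq_card => z; rewrite !inE.
  have [-> | zs] := eqVneq z s; first by rewrite /T' (negbTE ys) eqxx (negbTE yNuv).
  by rewrite T'y //; case/norP: yNuv => /negbTE -> /negbTE ->; rewrite andbT.
have [y' [y's Tyy' T'yE]] : exists y', [/\ y' != s, T y y' &
    forall z, z != s -> T' y z = T y z && (z != y')].
  have uv : (u == v) = false by apply: contraTF Tuv => /eqP ->; rewrite Tirr.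
  case/orP: yuv => /eqP yE; [exists v | exists u]; rewrite yE in T'y *; split=> //.
  - by move=> z zs; rewrite T'y // eqxx uv orbF.
  - by rewrite Tsym.
  - by move=> z zs; rewrite T'y // eqxx eq_sym uv.
rewrite (cardsD1 s [set z | T' y z]) inE {1}/T' (negbTE ys) eqxx yuv.
rewrite (cardsD1 y' ([set z | T y z] :\ s)) !inE y's Tyy'.
congr (1 + _); apply: eq_card => z; rewrite !inE.
by have [-> | zs] := eqVneq z s; rewrite ?andbF //= T'yE // andbC.
Qed.

Lemma deg_leaf_swap y : y != s -> deg T' y + (y == w) = deg T y.
Proof.
move=> ys; rewrite /deg leaf_swap_nbrs // [in RHS](cardsD1 s) inE Tsym s_nbr.
by rewrite addnC.
Qed.

Lemma deg_leaf_swap_s : deg T' s = 2.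
Proof.
have uv : u != v by apply: contraTneq Tuv => ->; rewrite Tirr.
rewrite /deg (_ : [set z | T' s z] = [set u; v]) ?cards2 ?uv //.
by apply/setP => z; rewrite !inE leaf_swap_s.
Qed.

Lemma leaf_nbr_neq_s : w != s.
Proof. by apply/eqP => ws; move: (s_nbr w); rewrite ws Tirr eqxx. Qed.

Lemma deg_leaf_swap_other y : y != s -> y != w -> deg T' y = deg T y.
Proof. by move=> ys /negbTE yw; rewrite -deg_leaf_swap // yw addn0. Qed.

Lemma nleaves_leaf_swap_lt : deg T w != 2 -> nleaves T' < nleaves T.
Proof.
move=> degw; apply: proper_card; apply/properP; split; last first.
  by exists s; rewrite !inE; [exact: s_leaf | rewrite /leaf deg_leaf_swap_s].
apply/subsetP => y; rewrite !inE /leaf.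
have [-> | ys] := eqVneq y s; first by rewrite deg_leaf_swap_s.
have [-> | yw] := eqVneq y w; last by rewrite deg_leaf_swap_other.
by move=> /eqP degw'; move: degw; rewrite -deg_leaf_swap ?leaf_nbr_neq_s // degw' eqxx.
Qed.

Section DegreeTwoNeighbour.
Hypothesis degw : deg T w = 2.

Lemma deg_leaf_swap_w : deg T' w = 1.
Proof. by apply/eqP; rewrite -(eqn_add2r 1) -[X in _ == X]degw -deg_leaf_swap ?leaf_nbr_neq_s ?eqxx. Qed.

Lemma branch_leaf_swap : branch T' =1 branch T.
Proof.
move=> y; rewrite /branch.
have [-> | ys] := eqVneq y s; first by rewrite deg_leaf_swap_s (eqP s_leaf).
have [-> | yw] := eqVneq y w; first by rewrite deg_leaf_swap_w degw.
by rewrite deg_leaf_swap_other.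
Qed.

Lemma nleaves_leaf_swap : nleaves T' = nleaves T.
Proof.
rewrite /nleaves (_ : [set y | leaf T' y] = w |: ([set y | leaf T y] :\ s)).
  by rewrite cardsU1 !inE /leaf degw /= [in RHS](cardsD1 s) inE (eqP s_leaf) andbF.
apply/setP => y; rewrite !inE /leaf.
have [-> | yw] := eqVneq y w; first by rewrite deg_leaf_swap_w.
have [-> | ys] := eqVneq y s; first by rewrite deg_leaf_swap_s.
by rewrite deg_leaf_swap_other.
Qed.

Variable Q : pred V.
Hypotheses (Qs : Q s) (Q_not_leaf : forall y, Q y -> ~~ leaf T' y).
Hypothesis Q_closed : forall y z, Q y -> T' y z -> Q z || branch T z.

Lemma stem_path_avoids x q : ~~ Q x -> path T' x q ->
  all (fun y => ~~ branch T y) (belast x q) -> all (predC Q) (belast x q).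
Proof.
elim: q x => [//|a q IH] x xQ /= /andP[xa aq] /andP[xb qb].
rewrite xQ; case: q IH aq qb => [//|c q] IH aq qb; apply: IH => //.
apply: contra xb => Qa; have := Q_closed Qa (_ : T' a x).
by rewrite leaf_swap_sym xa (negbTE xQ) => /(_ isT).
Qed.

Lemma stem_removed_leaf_swap y : stem_removed T' y -> stem_removed T y /\ ~~ Q y.
Proof.
case=> x [y' [q [lx by' /and3P[xq /eqP lq uq] qb yq]]].
rewrite branch_leaf_swap in by'.
have {}qb : all (fun z => ~~ branch T z) (belast x q).
  by apply: sub_all qb => z; rewrite branch_leaf_swap.
have xQ : ~~ Q x by apply: contraL lx; apply: Q_not_leaf.
have avoid := stem_path_avoids xQ xq qb.
split; last exact: (allP avoid y yq).
have y's : y' != s by apply: contraTneq by' => ->; exact: leaf_not_branch s_leaf.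
have sNq : all (predC1 s) (x :: q).
  rewrite lastI all_rcons lq /= y's.
  by apply: sub_all avoid => z; apply: contraNneq => ->.
have Tq : path T x q := sub_in_path leaf_swap_sub sNq xq.
have [xw | /negbTE xw] := eqVneq x w.
  exists s, y', (w :: q); split=> //.
  - apply/and3P; rewrite -xw; split; first by rewrite /= s_nbr -xw eqxx.
    + by rewrite /= lq.
    apply/andP; split=> //.
    by apply/negP => sq; have := allP sNq s sq; rewrite /= eqxx.
  - by rewrite /= leaf_not_branch ?s_leaf // -xw.
  - by rewrite /= inE -xw yq orbT.
exists x, y', q; split=> //; last by rewrite /is_tpath Tq lq eqxx.
by rewrite /leaf -deg_leaf_swap_other ?xw //; case/andP: sNq.
Qed.

End DegreeTwoNeighbour.

End LeafSwap.

Section PathInterior.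
Variables (V : finType) (T : rel V) (b r : V) (p : seq V).
Hypotheses (Tsym : symmetric T) (bb : branch T b) (rb : branch T r).
Hypotheses (Pp : path T b p) (Pl : last b p = r) (Pu : uniq (b :: p)).

Local Notation P := (b :: p).

Definition inner_vertex y := (y \in P) && ~~ branch T y.

Lemma inner_vertex_nbrs y : inner_vertex y ->
  exists a c, [/\ a \in P, c \in P, a != c & [set z | T y z] = [set a; c]].
Proof.
case/andP=> yP yNb; set j := index y P.
have yE : nth b P j = y by rewrite nth_index.
have jn : j <= size p by rewrite -ltnS index_mem.
have j0 : 0 < j by rewrite lt0n; apply: contra yNb => /eqP j0; rewrite -yE j0.
have jp : j < size p.
  rewrite ltn_neqAle jn andbT; apply: contra yNb => /eqP jE.
  by rewrite -yE jE -[size p]/((size P).-1) nth_last /= Pl.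
have Tya : T y (nth b P j.-1).
  by rewrite -yE Tsym -{2}(prednK j0); apply/(pathP b Pp); lia.
have Tyc : T y (nth b P j.+1) by rewrite -yE; apply/(pathP b Pp).
have ac : nth b P j.-1 != nth b P j.+1 by rewrite nth_uniq //=; lia.
exists (nth b P j.-1), (nth b P j.+1).
split=> //; last exact: nbrs_deg2.
all: by rewrite mem_nth //=; lia.
Qed.

End PathInterior.

Section ConsecutivePathNeighbours.
Variables (V : finType) (G T : rel V) (b r s w : V) (p : seq V) (i : nat).
Hypotheses (Gsym : symmetric G) (Tsym : symmetric T) (Tirr : irreflexive T).
Hypotheses (TG : subrel T G) (Tconn : connected_graph T) (Tacyc : acyclic T).
Hypotheses (bb : branch T b) (rb : branch T r).
Hypotheses (Pp : path T b p) (Pl : last b p = r) (Pu : uniq (b :: p)).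
Hypothesis s_nbr : forall y, T s y = (y == w).
Hypothesis ip : i.+1 < size (b :: p).

Local Notation P := (b :: p).
Local Notation u := (nth b P i).
Local Notation v := (nth b P i.+1).
Local Notation T' := (leaf_swap T s u v).
Local Notation inner := (inner_vertex T b p).

Hypotheses (Gsu : G s u) (Gsv : G s v).

Lemma inner_vertex_deg y : inner y -> deg T y = 2.
Proof.
by case/(inner_vertex_nbrs Tsym bb rb Pp Pl Pu) => a [c [_ _ ac Ny]]; rewrite /deg Ny cards2 ac.
Qed.

Lemma inner_vertex_nbr y z : inner y -> T y z -> z \in P.
Proof.
case/(inner_vertex_nbrs Tsym bb rb Pp Pl Pu) => a [c [aP cP _ Ny]] Tyz.
have : z \in [set a; c] by rewrite -Ny inE.
by rewrite !inE => /orP[] /eqP ->.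
Qed.

Lemma s_notin_path : s \notin P.
Proof.
have s_leaf := leaf_of_unique_nbr s_nbr.
apply/negP => sP; have : deg T s = 2.
  by apply: inner_vertex_deg; rewrite /inner_vertex sP leaf_not_branch.
by rewrite (eqP s_leaf).
Qed.

Lemma path_vertex_neq_s j : j <= size p -> nth b P j != s.
Proof. by move=> jp; apply: contraNneq s_notin_path => <-; rewrite mem_nth. Qed.

Definition swap_zone y := (y == s) || inner y.

Lemma on_path_swap_zone y : y \in P -> swap_zone y || branch T y.
Proof. by move=> yP; rewrite /swap_zone /inner_vertex yP; case: branch; rewrite ?orbT. Qed.

Lemma path_edge_uv : T u v.
Proof. by apply/(pathP b Pp); rewrite -ltnS. Qed.

Lemma u_neq_s : u != s. Proof. by rewrite path_vertex_neq_s // -ltnS ltnW. Qed.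
Lemma v_neq_s : v != s. Proof. by rewrite path_vertex_neq_s. Qed.

Lemma swap_zone_not_leaf y : swap_zone y -> ~~ leaf T' y.
Proof.
rewrite /leaf; case/orP=> [/eqP -> | iy].
  by rewrite deg_leaf_swap_s // path_edge_uv.
have ys : y != s by apply: contraNneq s_notin_path => <-; case/andP: iy.
have yw : y != w.
  by rewrite -s_nbr Tsym; apply: contraFN (negbTE s_notin_path); apply: inner_vertex_nbr.
rewrite (deg_leaf_swap_other Tsym Tirr s_nbr path_edge_uv) ?u_neq_s ?v_neq_s //.
by rewrite inner_vertex_deg.
Qed.

Lemma swap_zone_closed y z : swap_zone y -> T' y z -> swap_zone z || branch T z.
Proof.
case/orP=> [/eqP -> | iy].
  by rewrite leaf_swap_s => /orP[] /eqP ->; apply: on_path_swap_zone; rewrite mem_nth // ltnW.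
have [-> | zs] := eqVneq z s; first by rewrite /swap_zone eqxx.
have ys : y != s by apply: contraNneq s_notin_path => <-; case/andP: iy.
by move/(leaf_swap_sub ys zs)/(inner_vertex_nbr iy)/on_path_swap_zone.
Qed.

Lemma leaf_swap_spanning_tree : spanning_tree G T'.
Proof.
split.
- exact: leaf_swap_sym.
- exact: leaf_swap_subrel.
- exact: (leaf_swap_connected v Tsym s_nbr u_neq_s Tconn).
- exact: (leaf_swap_acyclic s Tsym path_edge_uv Tacyc).
Qed.

Lemma leaf_swap_rstem_card : deg T w = 2 -> rstem_card T < rstem_card T'.
Proof.
move=> degw.
have T'T y : stem_removed T' y -> stem_removed T y /\ ~~ swap_zone y.
  apply: (stem_removed_leaf_swap Tsym Tirr s_nbr path_edge_uv u_neq_s v_neq_s degw);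
    [by rewrite /swap_zone eqxx | exact: swap_zone_not_leaf | exact: swap_zone_closed].
apply: (rstem_card_lt (s := s)).
- by move=> y /T'T [].
- exact: leaf_stem_removed Tconn bb (leaf_of_unique_nbr s_nbr).
- by case/T'T => _; rewrite /swap_zone eqxx.
Qed.

Lemma leaf_swap_contradiction : C1 G T -> C2 G T -> False.
Proof.
move=> C1T C2T; have tree' := leaf_swap_spanning_tree.
have nleaves' := nleaves_leaf_swap Tsym Tirr s_nbr path_edge_uv u_neq_s v_neq_s.
have nleaves_lt' := nleaves_leaf_swap_lt Tsym Tirr s_nbr path_edge_uv u_neq_s v_neq_s.
have [degw | degw] := eqVneq (deg T w) 2.
  by have := C2T _ tree' (nleaves' degw); rewrite leqNgt leaf_swap_rstem_card.
by have := C1T _ tree'; rewrite leqNgt nleaves_lt'.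
Qed.

End ConsecutivePathNeighbours.

Theorem claim4p3 (V : finType) (G T : rel V) (b r s : V) (p : seq V) :
  symmetric G -> irreflexive G ->
  connected_graph G -> ~ has_ham_path G ->
  spanning_tree G T -> C1 G T -> C2 G T ->
  branch T b -> branch T r -> is_tpath T b r p ->
  (forall v, v \in b :: p -> branch T v -> v = b \/ v = r) ->
  leaf T s ->
  forall i, i.+1 < size (b :: p) ->
    G s (nth b (b :: p) i.+1) -> ~~ G s (nth b (b :: p) i).
Proof.
(* Neither the connectivity of G, nor the absence of a Hamiltonian path, nor
   the fact that b and r are the only branch vertices of the path is needed. *)
move=> Gsym Girr _ _ [Tsym TG Tconn Tacyc] C1T C2T bb rb /and3P[Pp /eqP Pl Pu] _ ls.
move=> i ip Gsv; apply/negP => Gsu.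
have Tirr : irreflexive T by move=> y; apply/negP => /TG; rewrite Girr.
have [w s_nbr] : exists w, forall y, T s y = (y == w).
  by case/cards1P: ls => w Ns; exists w => y; rewrite -in_set1 -Ns inE.
exact: (leaf_swap_contradiction Gsym Tsym Tirr TG Tconn Tacyc bb rb Pp Pl Pu s_nbr ip Gsu Gsv).
Qed.
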